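(* Assume $a_j\ge0$ for all $j$. Let $M>0$, $\ell\ge0$, let $x\in X_{<M}$, and let $v\in\Lambda_x\setminus\{0\}$ satisfy $\|va^n\|\le 1/M$ for all $n\in\{1,\dots,\ell+1\}$. For each $j$ define $s_j\in[-\infty,\infty]$ by $|v_j''|=|v_j'|e^{s_j}$, and let $\mathcal L=\{j:s_j\le0\}$, $\mathcal C=\{j:0<s_j\le(\ell+1)a_j\}$, $\mathcal R=\{j:s_j>(\ell+1)a_j\}$. Then $$(\ell+1)\Bigl(\sum_{j\in\mathcal L}a_j\delta_j+\sum_{j\in\mathcal C}a_j\delta_j-\sum_{j\in\mathcal R}a_j\delta_j\Bigr)<2\sum_{j\in\mathcal C}s_j\delta_j.$$
   Context: Setup. Let $F$ be an algebraic number field with ring of integers $\mathcal O$, real embeddings $\sigma_1,\dots,\sigma_r$ and complex embeddings $\sigma_{r+1},\dots,\sigma_{r+s}$ (one from each conjugate pair). Let $G=\prod_{j=1}^r\mathrm{SL}_2(\mathbb R)\times\prod_{j=1}^s\mathrm{SL}_2(\mathbb C)$ and $\Gamma=\mathrm{SL}_2(\mathcal O)$, embedded in $G$ via $\gamma\mapsto(\sigma_1(\gamma),\dots,\sigma_{r+s}(\gamma))$ (entrywise); $X=\Gamma\backslash G$. Fix a diagonal element $a=\bigl(\mathrm{diag}(e^{i\theta_j}e^{a_j/2},e^{-i\theta_j}e^{-a_j/2})\bigr)_{j=1}^{r+s}\in G$ with $a_j\in\mathbb R$, $\theta_j\in[0,2\pi]$, $\theta_1=\dots=\theta_r=0$.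 Set $\delta_j=1$ for $j\le r$, $\delta_j=2$ for $j>r$. Vectors in $(\mathbb R^2)^r\times(\mathbb C^2)^s$ are written $v=(v_1',v_1'')\times\cdots\times(v_{r+s}',v_{r+s}'')$; $\mathcal O$ acts by $\lambda\cdot v=(\sigma_j(\lambda)v_j',\sigma_j(\lambda)v_j'')_j$, $G$ acts on the right componentwise (row vector times matrix), so $va^n$ has components $(v_j'e^{in\theta_j}e^{na_j/2},\,v_j''e^{-in\theta_j}e^{-na_j/2})$. A point $x=\Gamma g$ is identified with the $\mathcal O$-module $\Lambda_x$ generated by the two rows of $g$. Define $|(v_j',v_j'')|=\max\{|v_j'|,|v_j''|\}$, $\|v\|=\prod_j|(v_j',v_j'')|^{\delta_j}$, $\mathrm{ht}(x)=\max\{\|v\|^{-1}:v\in\Lambda_x\setminus\{0\}\}$, $X_{<M}=\{x:\mathrm{ht}(x)<M\}$. *)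

(* The number field F is a MathComp [fieldExtType rat]
   (finite-dimensional field extension of Q); everything analytic (the group G,
   exponentials, norms, heights) is done with Stdlib's real numbers R,
   with complex numbers modelled as pairs of reals. *)
From Stdlib Require Import Reals.
From HB Require Import structures.
From mathcomp Require Import all_boot all_order all_algebra all_field.

Set Implicit Arguments.
Unset Strict Implicit.
Unset Printing Implicit Defensive.

Record CC := mkCC { cre : R ; cim : R }.

Local Open Scope R_scope.

Definition C0 : CC := mkCC 0 0.
Definition C1 : CC := mkCC 1 0.
Definition Cadd (z w : CC) : CC := mkCC (cre z + cre w) (cim z + cim w).
Definition Cmul (z w : CC) : CC :=
  mkCC (cre z * cre w - cim z * cim w) (cre z * cim w + cim z * cre w).
Definition Cconj (z : CC) : CC := mkCC (cre z) (- cim z).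
Definition Cmod (z : CC) : R := sqrt (cre z ^ 2 + cim z ^ 2).
Definition Creal (x : R) : CC := mkCC x 0.
Definition Cexpi (t : R) : CC := mkCC (cos t) (sin t).

Definition ring_emb (L : fieldExtType rat) (f : L -> CC) : Prop :=
  f (GRing.one L) = C1 /\
  (forall x y : L, f (GRing.add x y) = Cadd (f x) (f y)) /\
  (forall x y : L, f (GRing.mul x y) = Cmul (f x) (f y)).

(* sigma 0, ..., sigma (r-1) are the real embeddings and sigma r, ...,
   sigma (r+s-1) are the complex (non-real) embeddings, one from each
   conjugate pair; every embedding F -> C is one of them or the complex
   conjugate of one of them, and they are pairwise distinct up to conjugation.
   (Indices are 0-based: paper's j = 1..r+s is j = 0..r+s-1 here.) *)
Definition number_field_embeddings (L : fieldExtType rat) (r s : nat)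
    (sigma : nat -> L -> CC) : Prop :=
  (forall j, (j < r + s)%N -> ring_emb (sigma j)) /\
  (forall j, (j < r)%N -> forall x : L, cim (sigma j x) = 0) /\
  (forall j, (r <= j)%N -> (j < r + s)%N -> exists x : L, cim (sigma j x) <> 0) /\
  (forall i j, (i < r + s)%N -> (j < r + s)%N -> i <> j ->
     (exists x : L, sigma i x <> sigma j x) /\
     (exists x : L, sigma i x <> Cconj (sigma j x))) /\
  (forall f : L -> CC, ring_emb f ->
     exists j, (j < r + s)%N /\
       ((forall x, f x = sigma j x) \/ (forall x, f x = Cconj (sigma j x)))).

Definition in_O (L : fieldExtType rat) (x : L) : Prop :=
  integralOver (fun z : int => (z%:~R)%R : L) x.

Record M2 := mkM2 { m11 : CC ; m12 : CC ; m21 : CC ; m22 : CC }.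

Definition M2det (m : M2) : CC :=
  Cadd (Cmul (m11 m) (m22 m)) (Cmul (Creal (-1)) (Cmul (m12 m) (m21 m))).

Definition M2real (m : M2) : Prop :=
  cim (m11 m) = 0 /\ cim (m12 m) = 0 /\ cim (m21 m) = 0 /\ cim (m22 m) = 0.

Definition in_G (r s : nat) (g : nat -> M2) : Prop :=
  (forall j, (j < r + s)%N -> M2det (g j) = C1) /\
  (forall j, (j < r)%N -> M2real (g j)).

(* v j = (v_j', v_j'') *)
Definition vec := nat -> (CC * CC)%type.

Definition vmul (u : CC * CC) (m : M2) : CC * CC :=
  (Cadd (Cmul u.1 (m11 m)) (Cmul u.2 (m21 m)),
   Cadd (Cmul u.1 (m12 m)) (Cmul u.2 (m22 m))).

Definition vact (v : vec) (g : nat -> M2) : vec := fun j => vmul (v j) (g j).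

Definition vec_nonzero (n : nat) (v : vec) : Prop :=
  exists j, (j < n)%N /\ v j <> (C0, C0).

(* Lambda_x for x = Gamma g: the O-module generated by the two rows of g,
   O acting through the embeddings. *)
Definition in_Lambda (L : fieldExtType rat) (r s : nat) (sigma : nat -> L -> CC)
    (g : nat -> M2) (v : vec) : Prop :=
  exists alpha beta : L, in_O alpha /\ in_O beta /\
    forall j, (j < r + s)%N ->
      v j = (Cadd (Cmul (sigma j alpha) (m11 (g j))) (Cmul (sigma j beta) (m21 (g j))),
             Cadd (Cmul (sigma j alpha) (m12 (g j))) (Cmul (sigma j beta) (m22 (g j)))).

Definition rsum (n : nat) (f : nat -> R) : R := foldr Rplus 0 (map f (iota 0 n)).
Definition rprod (n : nat) (f : nat -> R) : R := foldr Rmult 1 (map f (iota 0 n)).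

Definition delta (r j : nat) : nat := if (j < r)%N then 1%N else 2%N.

Definition pnorm (u : CC * CC) : R := Rmax (Cmod u.1) (Cmod u.2).
Definition vnorm (r s : nat) (v : vec) : R :=
  rprod (r + s) (fun j => pnorm (v j) ^ delta r j).

Definition is_height (L : fieldExtType rat) (r s : nat) (sigma : nat -> L -> CC)
    (g : nat -> M2) (h : R) : Prop :=
  (exists w, in_Lambda r s sigma g w /\ vec_nonzero (r + s) w /\ / vnorm r s w = h) /\
  (forall w, in_Lambda r s sigma g w -> vec_nonzero (r + s) w -> / vnorm r s w <= h).

Definition in_X_lt (L : fieldExtType rat) (r s : nat) (sigma : nat -> L -> CC)
    (g : nat -> M2) (M : R) : Prop :=
  exists h, is_height r s sigma g h /\ h < M.

Definition a_elt (aa th : nat -> R) : nat -> M2 := fun j =>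
  mkM2 (Cmul (Cexpi (th j)) (Creal (exp (aa j / 2)))) C0
       C0 (Cmul (Cexpi (- th j)) (Creal (exp (- (aa j / 2))))).

Definition theta_ok (r s : nat) (th : nat -> R) : Prop :=
  (forall j, (j < r + s)%N -> 0 <= th j <= 2 * PI) /\
  (forall j, (j < r)%N -> th j = 0).

Definition vpow (v : vec) (g : nat -> M2) (n : nat) : vec := iter n (fun w => vact w g) v.

Inductive ER := ERfin (x : R) | ERpinf | ERminf.

(* |v''| = |v'| e^{s} with s in [-oo, +oo] (e^{+oo} = +oo, e^{-oo} = 0):
   s finite iff both are nonzero (s = log(|v''|/|v'|)); s = +oo iff v' = 0 <> v'';
   s = -oo iff v'' = 0 <> v'. *)
Definition s_spec (n1 n2 : R) (x : ER) : Prop :=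
  match x with
  | ERfin y => 0 < n1 /\ n2 = n1 * exp y
  | ERpinf => n1 = 0 /\ 0 < n2
  | ERminf => 0 < n1 /\ n2 = 0
  end.

(* L = {s <= 0}, C = {0 < s <= t}, R = {s > t}, with t = (l+1) a_j *)
Definition in_Lset (x : ER) : bool :=
  match x with
  | ERminf => true
  | ERfin y => if Rle_dec y 0 then true else false
  | ERpinf => false
  end.
Definition in_Cset (t : R) (x : ER) : bool :=
  match x with
  | ERfin y => if Rlt_dec 0 y then (if Rle_dec y t then true else false) else false
  | _ => false
  end.
Definition in_Rset (t : R) (x : ER) : bool :=
  match x with
  | ERpinf => true
  | ERfin y => if Rlt_dec t y then true else false
  | ERminf => false
  end.
(* value of a finite extended real (only used on C, where s_j is finite) *)
Definition ER_val (x : ER) : R := match x with ERfin y => y | _ => 0 end.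

From Pilot Require Import Defs.
From Stdlib Require Import Reals Lra.
From HB Require Import structures.
From mathcomp Require Import all_boot all_order all_algebra all_field.

(* The element a acts diagonally, so along the orbit the two
   coordinates of v_j are scaled: |(va^n)_j'| = |v_j'| e^{n a_j/2} and
   |(va^n)_j''| = |v_j''| e^{-n a_j/2}.  Writing |v_j''| = |v_j'| e^{s_j} and
   t = n a_j, the max-norm of the j-th coordinate therefore gets multiplied by
   exp(log_growth t s_j), where log_growth equals t/2 on L, t/2 - s_j on C and
   -t/2 on R.  Taking the product over j (with exponents delta_j) gives
     ||v a^{l+1}|| = ||v|| * exp( sum_j delta_j log_growth((l+1)a_j, s_j) ).
   Since ht(x) < M, every nonzero w in Lambda_x has ||w|| > 1/M, whereas
   ||v a^{l+1}|| <= 1/M by hypothesis; hence the exponent is negative, and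
   rearranged this is exactly the claimed inequality. *)

Local Open Scope R_scope.

Lemma Cmod_ge0 (z : CC) : 0 <= Cmod z.
Proof. exact: sqrt_pos. Qed.

Lemma Cmod_mul_phase (z : CC) (t e : R) :
  0 <= e -> Cmod (Cmul z (Cmul (Cexpi t) (Defs.Creal e))) = Cmod z * e.
Proof.
move=> He; rewrite /Cmod /Cmul /Cexpi /Defs.Creal /=.
have Hsc := sin2_cos2 t; rewrite /Rsqr in Hsc.
have -> : (cre z * (cos t * e - sin t * 0) - cim z * (cos t * 0 + sin t * e)) ^ 2 +
          (cre z * (cos t * 0 + sin t * e) + cim z * (cos t * e - sin t * 0)) ^ 2
        = (cre z ^ 2 + cim z ^ 2) * e ^ 2 * (sin t * sin t + cos t * cos t) by ring.
rewrite Hsc Rmult_1_r sqrt_mult; [|nra|nra].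
by rewrite sqrt_pow2.
Qed.

Lemma Cmod_vmul_diag1 (u : CC * CC) (d1 d2 : CC) :
  Cmod (vmul u (mkM2 d1 C0 C0 d2)).1 = Cmod (Cmul u.1 d1).
Proof. by rewrite /vmul /Cmod /Cadd /Cmul /C0 /=; f_equal; ring. Qed.

Lemma Cmod_vmul_diag2 (u : CC * CC) (d1 d2 : CC) :
  Cmod (vmul u (mkM2 d1 C0 C0 d2)).2 = Cmod (Cmul u.2 d2).
Proof. by rewrite /vmul /Cmod /Cadd /Cmul /C0 /=; f_equal; ring. Qed.

Lemma vpow_coord (v : vec) (g : nat -> M2) (n j : nat) :
  vpow v g n j = iter n (fun u => vmul u (g j)) (v j).
Proof. by elim: n => [|n IH] //=; rewrite /vact IH. Qed.

Lemma Cmod_vpow_a (v : vec) (aa th : nat -> R) (n j : nat) :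
  Cmod (vpow v (a_elt aa th) n j).1 = Cmod (v j).1 * exp (INR n * aa j / 2) /\
  Cmod (vpow v (a_elt aa th) n j).2 = Cmod (v j).2 * exp (- (INR n * aa j / 2)).
Proof.
rewrite vpow_coord; elim: n => [|n [IH1 IH2]].
  by rewrite /= !Rmult_0_l /Rdiv Rmult_0_l Ropp_0 exp_0; lra.
(* hide the first n steps so that unfolding a_elt only affects the last one *)
rewrite [iter _ _ _]/=; set u := iter _ _ _.
rewrite /a_elt Cmod_vmul_diag1 Cmod_vmul_diag2.
rewrite !Cmod_mul_phase; try by apply/Rlt_le/exp_pos.
rewrite IH1 IH2 S_INR !Rmult_assoc -!exp_plus.
by split; do 2 f_equal; field.
Qed.

(* exp is monotone, hence commutes with max. *)
Lemma Rmax_exp (u w : R) : Rmax (exp u) (exp w) = exp (Rmax u w).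
Proof.
rewrite /Rmax; case: Rle_dec => Hexp; case: Rle_dec => Huw //.
- apply: Rle_antisym => //; apply/Rlt_le/exp_increasing; exact: Rnot_le_lt Huw.
- case: (Rle_lt_or_eq_dec _ _ Huw) => [Hlt | ->] //.
  by exfalso; apply/Hexp/Rlt_le/exp_increasing.
Qed.

(* The logarithmic growth of the max-norm of one coordinate after applying
   a^n, where t = n a_j and x = s_j: t/2 on L, t/2 - s_j on C, -t/2 on R. *)
Definition log_growth (t : R) (x : ER) : R :=
  (if in_Lset x then t / 2 else 0)
  + (if in_Cset t x then t / 2 - ER_val x else 0)
  - (if in_Rset t x then t / 2 else 0).

Lemma Rmax_diag_growth (c1 c2 t : R) (x : ER) :
  0 <= c1 -> 0 <= c2 -> 0 <= t -> s_spec c1 c2 x ->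
  Rmax (c1 * exp (t / 2)) (c2 * exp (- (t / 2))) = Rmax c1 c2 * exp (log_growth t x).
Proof.
move=> Hc1 Hc2 Ht; rewrite /log_growth; case: x => [y| |] /=.
- move=> [Hc1pos ->].
  have -> : Rmax c1 (c1 * exp y) = c1 * exp (Rmax 0 y).
    by rewrite -Rmax_exp exp_0 -RmaxRmult ?Rmult_1_r.
  rewrite Rmult_assoc -exp_plus RmaxRmult // Rmax_exp Rmult_assoc -exp_plus.
  do 2 f_equal.
  rewrite /Rmax; do 6 case: Rle_dec || case: Rlt_dec; move=> * /=; lra.
- move=> [-> Hc2pos]; rewrite Rmult_0_l !Rmax_right; try lra.
    by do 2 f_equal; lra.
  by apply/Rlt_le/Rmult_lt_0_compat => //; exact: exp_pos.
- move=> [Hc1pos ->]; rewrite Rmult_0_l !Rmax_left; try lra.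
    by do 2 f_equal; lra.
  by apply/Rlt_le/Rmult_lt_0_compat => //; exact: exp_pos.
Qed.

Lemma prod_exp_factor (xs : seq nat) (A B D : nat -> R) :
  {in xs, forall j, A j = B j * exp (D j)} ->
  foldr Rmult 1 (map A xs) = foldr Rmult 1 (map B xs) * exp (foldr Rplus 0 (map D xs)).
Proof.
elim: xs => [|j xs IH] HA /=; first by rewrite exp_0; ring.
rewrite IH => [|i Hi]; last by apply: HA; rewrite inE Hi orbT.
by rewrite HA ?inE ?eqxx // exp_plus; ring.
Qed.

Lemma prod_pos (xs : seq nat) (A : nat -> R) :
  {in xs, forall j, 0 < A j} -> 0 < foldr Rmult 1 (map A xs).
Proof.
elim: xs => [|j xs IH] HA /=; first lra.
apply: Rmult_lt_0_compat; first by apply: HA; rewrite inE eqxx.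
by apply: IH => i Hi; apply: HA; rewrite inE Hi orbT.
Qed.

Lemma sum_affine (xs : seq nat) (c : R) (f g h k : nat -> R) :
  foldr Rplus 0 (map (fun j => c * (f j + g j - h j) - k j) xs) =
  c * (foldr Rplus 0 (map f xs) + foldr Rplus 0 (map g xs) - foldr Rplus 0 (map h xs))
  - foldr Rplus 0 (map k xs).
Proof. by elim: xs => [|j xs IH] /=; [ring | rewrite IH; ring]. Qed.

Lemma exp_pow (d : R) (k : nat) : exp d ^ k = exp (INR k * d).
Proof. by rewrite -Rpower_pow ?/Rpower ?ln_exp //; exact: exp_pos. Qed.

Lemma vnorm_vpow_a {r s : nat} {aa th : nat -> R} {v : vec} {sv : nat -> ER} {n : nat} :
  (forall j, (j < r + s)%N -> 0 <= aa j) ->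
  (forall j, (j < r + s)%N -> s_spec (Cmod (v j).1) (Cmod (v j).2) (sv j)) ->
  vnorm r s (vpow v (a_elt aa th) n) =
  vnorm r s v * exp (rsum (r + s) (fun j => INR (delta r j) * log_growth (INR n * aa j) (sv j))).
Proof.
move=> Hapos Hs; apply: prod_exp_factor => j; rewrite mem_iota leq0n add0n => Hj.
rewrite /pnorm; have [-> ->] := Cmod_vpow_a v aa th n j.
rewrite (Rmax_diag_growth _ _ _ (sv j)); [|exact: Cmod_ge0 | exact: Cmod_ge0| |exact: Hs].
  by rewrite Rpow_mult_distr exp_pow.
by apply: Rmult_le_pos; [exact: pos_INR | exact: Hapos].
Qed.

(* A pair of moduli admitting an exponent s_j is not (0, 0), so a vector
   with all s_j defined has positive norm. *)
Lemma pnorm_pos (u : CC * CC) (x : ER) : s_spec (Cmod u.1) (Cmod u.2) x -> 0 < pnorm u.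
Proof.
rewrite /pnorm; case: x => [y| |] [H1 H2].
- exact: Rlt_le_trans H1 (Rmax_l _ _).
- exact: Rlt_le_trans H2 (Rmax_r _ _).
- exact: Rlt_le_trans H1 (Rmax_l _ _).
Qed.

Lemma vnorm_pos {r s : nat} {v : vec} {sv : nat -> ER} :
  (forall j, (j < r + s)%N -> s_spec (Cmod (v j).1) (Cmod (v j).2) (sv j)) ->
  0 < vnorm r s v.
Proof.
move=> Hs; apply: prod_pos => j; rewrite mem_iota leq0n add0n => Hj.
exact/pow_lt/pnorm_pos/Hs.
Qed.

Lemma vnorm_gt_inv_height {L : fieldExtType rat} {r s : nat} {sigma : nat -> L -> CC}
    {g : nat -> M2} {M : R} {w : vec} :
  0 < M -> in_X_lt r s sigma g M -> in_Lambda r s sigma g w ->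
  vec_nonzero (r + s) w -> 0 < vnorm r s w -> / M < vnorm r s w.
Proof.
move=> HM [h [[_ Hmax] HhM]] Hw Hw0 Hpos.
have Hinv : / vnorm r s w < M by have := Hmax w Hw Hw0; lra.
rewrite -(Rinv_inv (vnorm r s w)); apply: Rinv_lt_contravar Hinv.
by apply: Rmult_lt_0_compat => //; exact: Rinv_0_lt_compat.
Qed.

Lemma rsum_log_growth (n : nat) (r : nat) (T : R) (aa : nat -> R) (sv : nat -> ER) :
  rsum n (fun j => INR (delta r j) * log_growth (T * aa j) (sv j)) =
  T / 2 * ( rsum n (fun j => if in_Lset (sv j) then aa j * INR (delta r j) else 0)
          + rsum n (fun j => if in_Cset (T * aa j) (sv j) then aa j * INR (delta r j) else 0)
          - rsum n (fun j => if in_Rset (T * aa j) (sv j) then aa j * INR (delta r j) else 0))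
  - rsum n (fun j => if in_Cset (T * aa j) (sv j) then ER_val (sv j) * INR (delta r j) else 0).
Proof.
rewrite /rsum -sum_affine; congr foldr; apply: eq_map => j.
rewrite /log_growth.
by case: (in_Lset _); case: (in_Cset _ _); case: (in_Rset _ _); field.
Qed.

Theorem lemma5p3 (L : fieldExtType rat) (r s : nat) (sigma : nat -> L -> CC)
    (Hsigma : number_field_embeddings r s sigma)
    (aa th : nat -> R) (Hth : theta_ok r s th)
    (Hapos : forall j, (j < r + s)%N -> 0 <= aa j)
    (M : R) (HM : 0 < M) (l : nat)
    (g : nat -> M2) (Hg : in_G r s g) (Hx : in_X_lt r s sigma g M)
    (v : vec) (Hv : in_Lambda r s sigma g v) (Hv0 : vec_nonzero (r + s) v)
    (Hn : forall n, (1 <= n)%N -> (n <= l.+1)%N ->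
            vnorm r s (vpow v (a_elt aa th) n) <= / M)
    (sv : nat -> ER)
    (Hs : forall j, (j < r + s)%N -> s_spec (Cmod (v j).1) (Cmod (v j).2) (sv j)) :
  (INR l + 1) *
    ( rsum (r + s) (fun j => if in_Lset (sv j) then aa j * INR (delta r j) else 0)
    + rsum (r + s) (fun j => if in_Cset ((INR l + 1) * aa j) (sv j)
                             then aa j * INR (delta r j) else 0)
    - rsum (r + s) (fun j => if in_Rset ((INR l + 1) * aa j) (sv j)
                             then aa j * INR (delta r j) else 0))
  < 2 * rsum (r + s) (fun j => if in_Cset ((INR l + 1) * aa j) (sv j)
                               then ER_val (sv j) * INR (delta r j) else 0).
Proof.
have Hpos := vnorm_pos Hs.
have Hlow := vnorm_gt_inv_height HM Hx Hv Hv0 Hpos.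
have Hup := Hn l.+1 (ltn0Sn l) (leqnn _).
rewrite (vnorm_vpow_a (th := th) (n := l.+1) Hapos Hs) S_INR rsum_log_growth in Hup.
set growth := (X in exp X) in Hup.
(* ||v|| e^{growth} <= 1/M < ||v|| forces the total growth to be negative. *)
have Hneg : growth < 0.
  apply: exp_lt_inv; rewrite exp_0.
  apply: (Rmult_lt_reg_l (vnorm r s v)) => //; lra.
rewrite /growth in Hneg; lra.
Qed.
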